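(* Let $V\in(\mathbb{R}\cup\{-\infty\})^{n\times p}$ have no row and no column identically equal to $-\infty$. If a Hilbert ball $B(a,r)$ with $a\in\mathbb{R}^n$ and radius $r>0$ is included in $\operatorname{Col}(V)$, then it is also included in a simplicial tropical cone generated by some $n$ columns of $V$.
   Context: $\mathbb{R}_{\max}=\mathbb{R}\cup\{-\infty\}$. A tropical cone is a subset $\mathcal{C}\subset\mathbb{R}_{\max}^n$ such that $x,y\in\mathcal C$, $\lambda\in\mathbb{R}_{\max}$ imply $\lambda+x\in\mathcal C$ and $x\vee y=(\max(x_i,y_i))_i\in\mathcal C$. $\operatorname{Col}(V)$ is the tropical cone generated by the columns of $V$, i.e. $\{Vx:x\in\mathbb{R}_{\max}^p\}$ with $(Vx)_i=\max_k(V_{ik}+x_k)$. Hilbert's projective metric: $d(x,y)=\inf\{\lambda-\mu:\lambda,\mu\in\mathbb{R},\ \mu+y_i\le x_i\le\lambda+y_i\ \forall i\}$; $B(a,r)=\{x\in\mathbb{R}_{\max}^n:d(a,x)\le r\}$. A vector $u$ of a tropical cone $\mathcal C$ is extreme if $u=v\vee w$ with $v,w\in\mathcal C$ implies $u=v$ or $u=w$; an extreme direction is a set $\{\lambda+u:\lambda\in\mathbb{R}_{\max}\}$ with $u$ extreme. A tropical cone in $\mathbb{R}_{\max}^n$ is simplicial if it has precisely $n$ extreme directions. *)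

From HB Require Import structures.
From mathcomp Require Import all_boot all_order all_algebra.
From mathcomp Require Import boolp classical_sets reals constructive_ereal ereal.
Set Implicit Arguments. Unset Strict Implicit. Unset Printing Implicit Defensive.
Import Order.TTheory GRing.Theory Num.Theory.
Local Open Scope ring_scope.
Local Open Scope classical_set_scope.

Section Tropical.
Variable R : realType.

(* R_max = R U {-oo}, with None playing the role of -oo *)
Definition Rmax := option R.

Definition tadd (x y : Rmax) : Rmax :=
  match x, y with Some a, Some b => Some (a + b) | _, _ => None end.
Definition tmax (x y : Rmax) : Rmax :=
  match x, y with
  | Some a, Some b => Some (Num.max a b)
  | None, y => y
  | x, None => x
  end.
Definition tle (x y : Rmax) : bool :=
  match x, y with
  | None, _ => true
  | Some _, None => false
  | Some a, Some b => a <= b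
  end.

Definition tvec (n : nat) := 'I_n -> Rmax.

Definition tscale n (l : Rmax) (x : tvec n) : tvec n := fun i => tadd l (x i).
Definition tjoin n (x y : tvec n) : tvec n := fun i => tmax (x i) (y i).

Definition tropical_cone n (C : set (tvec n)) : Prop :=
  (forall x l, C x -> C (tscale l x)) /\ (forall x y, C x -> C y -> C (tjoin x y)).

Definition tmatvec n p (V : 'I_n -> 'I_p -> Rmax) (x : tvec p) : tvec n :=
  fun i => \big[tmax/None]_(k < p) tadd (V i k) (x k).

Definition Col n p (V : 'I_n -> 'I_p -> Rmax) : set (tvec n) :=
  [set y | exists x : tvec p, y = tmatvec V x].

(* Hilbert's projective metric, valued in extended reals (inf of empty set = +oo):
   d(x,y) = inf { l - m : l, m in R, m + y_i <= x_i <= l + y_i for all i } *)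
Definition hilbert n (x y : tvec n) : \bar R :=
  ereal_inf [set t : \bar R | exists l m : R, t = (l - m)%:E /\
     forall i, tle (tadd (Some m) (y i)) (x i) && tle (x i) (tadd (Some l) (y i))].

Definition hball n (a : tvec n) (r : R) : set (tvec n) :=
  [set x | (hilbert a x <= r%:E)%E].

Definition tzero n : tvec n := fun _ => None.

Definition extreme n (C : set (tvec n)) (u : tvec n) : Prop :=
  C u /\ u <> @tzero n /\
  (forall v w, C v -> C w -> u = tjoin v w -> u = v \/ u = w).

Definition direction n (u : tvec n) : set (tvec n) :=
  [set tscale l u | l in [set: Rmax]].

Definition simplicial n (C : set (tvec n)) : Prop :=
  tropical_cone C /\
  exists u : 'I_n -> tvec n,
    (forall i, extreme C (u i)) /\
    injective (fun i => direction (u i)) /\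
    (forall v, extreme C v -> exists i, direction v = direction (u i)).

End Tropical.

From HB Require Import structures.
From mathcomp Require Import all_boot all_order all_algebra.
From mathcomp Require Import boolp classical_sets reals constructive_ereal ereal.
From mathcomp Require Import lra.
Import Order.TTheory GRing.Theory Num.Theory.
Local Open Scope ring_scope.
Local Open Scope classical_set_scope.
Set Implicit Arguments. Unset Strict Implicit.

(* For each k the point a + r e_k lies in the ball, hence in Col V, and a
   column of V attaining its k-th coordinate, rescaled, is a vector w_k with
   w_k(k) = a_k + r and w_k(i) <= a_i for i <> k.  Any x in the ball equals
   the max of the (x_k - a_k - r) + w_k, so these n columns still generate a
   cone containing the ball.  Their dominant diagonal makes each w_k extreme
   and no two of them proportional (so the chosen columns are distinct),
   while every extreme vector of a finitely generated cone is proportional to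
   a generator: the cone is simplicial. *)

Section RmaxAlgebra.
Variable R : realType.
Implicit Types x y z : Rmax R.

Lemma tmaxA : associative (@tmax R).
Proof. by case=> [a|] [b|] [c|] //=; rewrite maxA. Qed.
Lemma tmaxC : commutative (@tmax R).
Proof. by case=> [a|] [b|] //=; rewrite maxC. Qed.
Lemma tmax0l : left_id None (@tmax R).
Proof. by case. Qed.
Lemma tmax0r : right_id None (@tmax R).
Proof. by case. Qed.

HB.instance Definition _ :=
  Monoid.isComLaw.Build (Rmax R) None (@tmax R) tmaxA tmaxC tmax0l.

Lemma tlexx x : tle x x.
Proof. by case: x => //= a. Qed.
Lemma tle_trans y x z : tle x y -> tle y z -> tle x z.
Proof. by case: x => [a|] //; case: y => [b|] //; case: z => [c|] //=; apply: le_trans. Qed.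
Lemma tle_anti x y : tle x y -> tle y x -> x = y.
Proof. by case: x => [a|]; case: y => [b|] //= h1 h2; rewrite (@le_anti _ _ a b) ?h1. Qed.
Lemma tle_maxl x y : tle x (tmax x y).
Proof. by case: x => [a|]; case: y => [b|] //=; rewrite ?le_max ?lexx. Qed.
Lemma tle_maxr x y : tle y (tmax x y).
Proof. by rewrite tmaxC tle_maxl. Qed.
Lemma tmax_le x y z : tle x z -> tle y z -> tle (tmax x y) z.
Proof. by case: x => [a|]; case: y => [b|]; case: z => [c|] //=; rewrite ge_max => -> ->. Qed.
Lemma tmax_idPl x y : tle y x -> tmax x y = x.
Proof. by move=> h; apply: tle_anti (tle_maxl _ _); apply: tmax_le (tlexx _) h. Qed.
Lemma tmaxEor x y : tmax x y = x \/ tmax x y = y.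
Proof. by case: x => [a|]; case: y => [b|] /=; auto; rewrite /Num.max; case: ifP; auto. Qed.

Lemma taddA x y z : tadd x (tadd y z) = tadd (tadd x y) z.
Proof. by case: x => [a|]; case: y => [b|]; case: z => [c|] //=; rewrite addrA. Qed.
Lemma taddC x y : tadd x y = tadd y x.
Proof. by case: x => [a|]; case: y => [b|] //=; rewrite addrC. Qed.
Lemma tadd0r x : tadd x None = None.
Proof. by case: x. Qed.
Lemma tadd_maxr x y z : tadd x (tmax y z) = tmax (tadd x y) (tadd x z).
Proof.
case: x => [a|]; case: y => [b|]; case: z => [c|] //=.
by congr Some; rewrite /Num.max ltrD2l; case: ifP.
Qed.

Lemma tscaleA n x y (u : tvec R n) : tscale x (tscale y u) = tscale (tadd x y) u.
Proof. by apply: funext => i; rewrite /tscale taddA. Qed.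

Lemma direction_self n (u : tvec R n) : direction u u.
Proof.
by exists (Some 0) => //; apply: funext => i; rewrite /tscale; case: (u i) => //= ?; rewrite add0r.
Qed.

Lemma direction_tscale n (c : R) (u : tvec R n) :
  direction (tscale (Some c) u) = direction u.
Proof.
apply/seteqP; split => _ [l _ <-].
  by exists (tadd l (Some c)) => //; rewrite tscaleA.
exists (tadd l (Some (- c))) => //; rewrite tscaleA -taddA /= addNr.
by case: l => //= b; rewrite addr0.
Qed.

End RmaxAlgebra.

Section ExtremeVectors.
Variables (R : realType) (n : nat).
Implicit Types (C : set (tvec R n)) (u v : tvec R n).

Lemma tropical_cone_tzero C u : tropical_cone C -> C u -> C (@tzero R n).
Proof. by move=> [hscale _] /(hscale _ None). Qed.

Lemma tropical_cone_big_tjoin (I : Type) C (s : seq I) (F : I -> tvec R n) u :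
  tropical_cone C -> C u -> (forall j, C (F j)) ->
  C (\big[@tjoin R n/@tzero R n]_(j <- s) F j).
Proof.
move=> hC hu hF; elim: s => [|j s IH]; rewrite ?big_nil ?big_cons.
  exact: tropical_cone_tzero hC hu.
exact: hC.2.
Qed.

Lemma extreme_big_tjoin (I : Type) C (s : seq I) (F : I -> tvec R n) v :
  tropical_cone C -> (forall j, C (F j)) -> extreme C v ->
  v = \big[@tjoin R n/@tzero R n]_(j <- s) F j -> exists j, v = F j.
Proof.
move=> hC hF [hv [hv0 hext]]; elim: s => [|j s IH]; first by rewrite big_nil => /hv0.
rewrite big_cons => vE.
have hrest := tropical_cone_big_tjoin s hC hv hF.
by case: (hext _ _ (hF j) hrest vE) => [->|/IH]; [exists j|].
Qed.

End ExtremeVectors.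

Definition tcol (R : realType) n p (V : 'I_n -> 'I_p -> Rmax R) (k : 'I_p) : tvec R n :=
  fun i => V i k.

Section ColumnCones.
Variables (R : realType) (n p : nat).
Implicit Types (V : 'I_n -> 'I_p -> Rmax R) (x : tvec R p).

Lemma tmatvec_ge V x i k : tle (tadd (V i k) (x k)) (tmatvec V x i).
Proof. by rewrite /tmatvec (bigD1 k) //=; apply: tle_maxl. Qed.

Lemma tmatvec_attained V x i :
  tmatvec V x i = None \/ exists k, tmatvec V x i = tadd (V i k) (x k).
Proof.
apply: (big_ind (fun z => z = None \/ exists k, z = tadd (V i k) (x k))); eauto.
move=> u v [->|[k1 ->]] [->|[k2 ->]]; rewrite ?tmax0l ?tmax0r; eauto.
by case: (tmaxEor (tadd (V i k1) (x k1)) (tadd (V i k2) (x k2))) => ->; eauto.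
Qed.

Lemma tmatvec_tjoin V x :
  tmatvec V x = \big[@tjoin R n/@tzero R n]_(k < p) tscale (x k) (tcol V k).
Proof.
apply: funext => i.
rewrite (big_morph (fun u : tvec R n => u i) (op1 := @tmax R) (fun _ _ => erefl) erefl).
by apply: eq_bigr => k _; rewrite /tscale taddC.
Qed.

Lemma Col_cone V : tropical_cone (Col V).
Proof.
split.
- move=> _ l [x ->]; exists (tscale l x); apply: funext => i.
  rewrite /tscale /tmatvec (big_morph (tadd l) (tadd_maxr l) (tadd0r l)).
  by apply: eq_bigr => k _; rewrite taddA (taddC l) taddA.
- move=> _ _ [x ->] [y ->]; exists (tjoin x y); apply: funext => i.
  by rewrite /tjoin /tmatvec -big_split; apply: eq_bigr => k _; rewrite tadd_maxr.
Qed.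

Lemma Col_tcol V k : Col V (tcol V k).
Proof.
exists (fun j => if j == k then Some 0 else None); apply: funext => i.
rewrite /tmatvec (bigD1 k) //= eqxx big1 ?tmax0r; last first.
  by move=> j /negbTE ->; rewrite tadd0r.
by rewrite /tcol; case: (V i k) => //= w; rewrite addr0.
Qed.

Lemma extreme_Col_direction V v :
  extreme (Col V) v -> exists k, direction v = direction (tcol V k).
Proof.
move=> hv; have [[x vE] [hv0 _]] := hv.
have hgen k : Col V (tscale (x k) (tcol V k)) by apply: (Col_cone V).1; apply: Col_tcol.
have [k vk] := extreme_big_tjoin (Col_cone V) hgen hv (etrans vE (tmatvec_tjoin V x)).
exists k; rewrite vk; case xk: (x k) => [c|]; last by rewrite vk xk in hv0.
exact: direction_tscale.
Qed.

Lemma Col_scale_cols V (lam : 'I_p -> R) :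
  Col (fun i k => tadd (V i k) (Some (lam k))) = Col V.
Proof.
apply/seteqP; split => _ [x ->].
  exists (fun k => tadd (Some (lam k)) (x k)); apply: funext => i.
  by apply: eq_bigr => k _; rewrite taddA.
exists (fun k => tadd (Some (- lam k)) (x k)); apply: funext => i.
apply: eq_bigr => k _; case: (V i k) => [b|] //=; case: (x k) => [m|] //=.
by congr Some; lra.
Qed.

Lemma Col_supporting_column V y k c : Col V y -> y k = Some c ->
  exists j (l : R), tadd (V k j) (Some l) = Some c /\
    forall i, tle (tadd (V i j) (Some l)) (y i).
Proof.
move=> [x ->] yk; case: (tmatvec_attained V x k) => [|[j]]; first by rewrite yk.
rewrite yk; case xj: (x j) => [l|]; last by rewrite tadd0r.
by move=> hj; exists j, l; split => // i; rewrite -xj; apply: tmatvec_ge.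
Qed.

End ColumnCones.

Section HilbertBall.
Variables (R : realType) (n : nat).
Implicit Types (a : 'I_n -> R) (r : R).

Lemma hilbert_lt (x y : tvec R n) (t : R) : (hilbert x y < t%:E)%E ->
  exists l m : R, l - m < t /\
    forall i, tle (tadd (Some m) (y i)) (x i) && tle (x i) (tadd (Some l) (y i)).
Proof. by case/ereal_inf_lt => _ [l [m [-> h]]]; rewrite lte_fin => hlm; exists l, m. Qed.

Lemma hball_coords a r (x : tvec R n) : hball (fun i => Some (a i)) r x ->
  exists xr : 'I_n -> R, x = (fun i => Some (xr i)) /\
    forall i j, (xr i - a i) - (xr j - a j) <= r.
Proof.
move=> hx.
have near e : 0 < e -> exists l m : R, l - m < r + e /\ forall i,
    tle (tadd (Some m) (x i)) (Some (a i)) && tle (Some (a i)) (tadd (Some l) (x i)).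
  by move=> e0; apply: hilbert_lt; apply: le_lt_trans hx _; rewrite lte_fin ltrDl.
have [l [m [_ h1]]] := near 1 ltr01.
exists (fun i => odflt 0 (x i)); split.
  by apply: funext => i; move: (h1 i); case: (x i).
move=> i j; apply/ler_addgt0Pr => e e0.
have [l' [m' [hlm h]]] := near e e0.
move: (h i) (h j) (h1 i) (h1 j); case: (x i) => [xi|]; case: (x j) => [xj|] //=.
by move=> /andP[hi _] /andP[_ hj] _ _; lra.
Qed.

Lemma hball_intro a r (xr : 'I_n -> R) l m :
  l - m <= r -> (forall i, m + xr i <= a i <= l + xr i) ->
  hball (fun i => Some (a i)) r (fun i => Some (xr i)).
Proof.
move=> hlm h; apply: le_trans (_ : (l - m)%:E <= _)%E; last by rewrite lee_fin.
by apply: ereal_inf_lbound; exists l, m; split.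
Qed.

Lemma hball_shift_coord a r k : 0 <= r ->
  hball (fun i => Some (a i)) r (fun i => Some (a i + (if i == k then r else 0))).
Proof.
move=> r0; apply: (hball_intro (l := 0) (m := - r)); first by lra.
by move=> i; case: (i == k); apply/andP; split; lra.
Qed.

End HilbertBall.

Section DominantDiagonal.
Variables (R : realType) (n : nat) (W : 'I_n -> 'I_n -> Rmax R).
Variables (a : 'I_n -> R) (r : R).
Hypothesis r_gt0 : 0 < r.
Hypothesis W_diag : forall k, W k k = Some (a k + r).
Hypothesis W_offdiag : forall i k, i != k -> tle (W i k) (Some (a i)).

Lemma hball_sub_Col : hball (fun i => Some (a i)) r `<=` Col W.
Proof.
move=> x /hball_coords [xr [-> hx]].
exists (fun k => Some (xr k - a k - r)); apply: funext => i; symmetry.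
rewrite /tmatvec (bigD1 i) // W_diag [tadd _ _]/=.
have -> : a i + r + (xr i - a i - r) = xr i by lra.
apply: tmax_idPl; apply: (big_ind (fun z => tle z (Some (xr i)))) => //.
  by move=> u v; apply: tmax_le.
move=> k; rewrite eq_sym => /W_offdiag; have := hx k i.
by case: (W i k) => [w|] //= ? ?; lra.
Qed.

Lemma Col_le_tcol_eq k v : Col W v -> (forall i, tle (v i) (W i k)) ->
  v k = W k k -> v = tcol W k.
Proof.
move=> [mu ->] hle; rewrite W_diag.
case: (tmatvec_attained W mu k) => [->|[j ->]] //.
have [->|njk] := eqVneq j k.
  rewrite W_diag; case muk: (mu k) => [m|] //= [hm].
  apply: funext => i; apply: tle_anti (hle i) _.
  apply: tle_trans (tmatvec_ge W mu i k); rewrite /tcol /= muk.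
  have -> : m = 0 by lra.
  by case: (W i k) => [w|] //=; rewrite addr0.
(* Otherwise mu_j >= r by coordinate k, so v_j >= a_j + 2r exceeds W j k <= a_j. *)
have := tle_trans (tle_trans (tmatvec_ge W mu j j) (hle j)) (W_offdiag njk).
have nkj : k != j by rewrite eq_sym.
have := W_offdiag nkj.
rewrite W_diag; case: (W k j) => [w|] //=; case: (mu j) => [m|] //= ? ? [?].
by exfalso; have := r_gt0; lra.
Qed.

Lemma extreme_tcol k : extreme (Col W) (tcol W k).
Proof.
split; first exact: Col_tcol.
split; first by move/(congr1 (fun f => f k)); rewrite /tcol W_diag.
move=> v w hv hw vw.
have vwE i : W i k = tmax (v i) (w i) by rewrite -[W i k]/(tcol W k i) vw.
case: (tmaxEor (v k) (w k)) => ek; [left|right]; symmetry;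
  apply: Col_le_tcol_eq; rewrite ?vwE ?ek // => i; rewrite vwE.
- exact: tle_maxl.
- exact: tle_maxr.
Qed.

Lemma tcol_neq_tscale k k' l : k != k' -> tcol W k <> tscale l (tcol W k').
Proof.
move=> nkk' /[dup] /(congr1 (fun f => f k)) hk /(congr1 (fun f => f k')) hk'.
have nk'k : k' != k by rewrite eq_sym.
move: hk hk' (W_offdiag nkk') (W_offdiag nk'k).
rewrite /tscale /tcol !W_diag.
case: l => [c|] //=; case: (W k k') => [w1|] //=; case: (W k' k) => [w2|] //=.
by move=> [?] [?] ? ?; have := r_gt0; lra.
Qed.

Lemma direction_tcol_inj : injective (fun k => direction (tcol W k)).
Proof.
move=> k k' /= dE; apply/eqP; apply: contraT => nkk'.
have : direction (tcol W k') (tcol W k) by rewrite -dE; apply: direction_self.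
by case=> l _ /esym /(tcol_neq_tscale nkk').
Qed.

Lemma simplicial_Col : simplicial (Col W).
Proof.
split; first exact: Col_cone.
exists (tcol W); split; first exact: extreme_tcol.
by split; [exact: direction_tcol_inj | exact: extreme_Col_direction].
Qed.

End DominantDiagonal.

Theorem proposition3p8 (R : realType) (n p : nat)
    (V : 'I_n -> 'I_p -> Rmax R)
    (hrow : forall i : 'I_n, exists k : 'I_p, V i k <> None)
    (hcol : forall k : 'I_p, exists i : 'I_n, V i k <> None)
    (a : 'I_n -> R) (r : R) (hr : 0 < r) :
  hball (fun i => Some (a i)) r `<=` Col V ->
  exists f : 'I_n -> 'I_p, injective f /\
    simplicial (Col (fun i j => V i (f j))) /\
    hball (fun i => Some (a i)) r `<=` Col (fun i j => V i (f j)).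
Proof.
move=> ball_sub.
have dominant k : exists jl : 'I_p * R,
    tadd (V k jl.1) (Some jl.2) = Some (a k + r) /\
    forall i, i != k -> tle (tadd (V i jl.1) (Some jl.2)) (Some (a i)).
  have /ball_sub hk := hball_shift_coord a k (ltW hr).
  have [j [l [hjk hj]]] := Col_supporting_column hk (erefl : _ k = _); rewrite eqxx in hjk.
  by exists (j, l); split => // i /negbTE ik; move: (hj i); rewrite ik addr0.
have [F hF] := choice dominant.
pose f k := (F k).1; pose lam k := (F k).2; pose W i k := tadd (V i (f k)) (Some (lam k)).
have W_diag k : W k k = Some (a k + r) by case: (hF k).
have W_offdiag i k : i != k -> tle (W i k) (Some (a i)) by case: (hF k) => _; apply.
have f_inj : injective f.
  move=> k k' fE; apply/eqP; apply: contraT => nkk'; exfalso.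
  apply: (tcol_neq_tscale hr W_diag W_offdiag nkk' (l := Some (lam k - lam k'))).
  by apply: funext => i; rewrite /tcol /W /= fE; case: (V i (f k')) => //= v; congr Some; lra.
exists f; split => //.
rewrite -(Col_scale_cols _ lam).
exact: conj (simplicial_Col hr W_diag W_offdiag) (hball_sub_Col W_diag W_offdiag).
Qed.
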